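(* For non-negative integers $m$ and $n$, \[ \overline{{m+n \brack n}}_{q,t} = \sum_{k=0}^{\min\{m,n\}} t^k q^{\frac{k(k+1)}{2}} \frac{(q;q)_{m+n-k}}{(q;q)_k(q;q)_{m-k}(q;q)_{n-k}}. \]
   Context: An overpartition is a partition in which the last occurrence of each distinct part size may be overlined; its weight $|\lambda|$ is the sum of its parts. $\overline{{m+n \brack n}}_{q,t}=\sum_{\lambda} t^{\#_o(\lambda)} q^{|\lambda|}$, the sum over all overpartitions $\lambda$ with largest part at most $m$ and at most $n$ parts, $\#_o(\lambda)$ being the number of overlined parts. $(q;q)_k=\prod_{j=1}^k(1-q^j)$. *)

From mathcomp Require Import all_boot all_order all_algebra.
Set Implicit Arguments. Unset Strict Implicit. Unset Printing Implicit Defensive.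
Import GRing.Theory.
Local Open Scope ring_scope.

(* An overpartition is encoded as the list of its parts in nonincreasing
   order, each part paired with a flag "is overlined". *)
Fixpoint last_occ_ovl (s : seq (nat * bool)) : bool :=
  match s with
  | x :: ((y :: _) as s') => ((x.1 == y.1) ==> ~~ x.2) && last_occ_ovl s'
  | _ => true
  end.

Definition is_overpartition (s : seq (nat * bool)) : bool :=
  [&& all (fun p => 0 < p.1)%N s,
      sorted (fun x y => y.1 <= x.1)%N s & last_occ_ovl s].

Definition op_weight (s : seq (nat * bool)) : nat := sumn (map fst s).
Definition op_novl (s : seq (nat * bool)) : nat := count snd s.

Definition op_seq m k (u : k.-tuple ('I_m.+1 * bool)) : seq (nat * bool) :=
  map (fun p => (nat_of_ord p.1, p.2)) u.

(* \overline{[m+n, n]}_{q,t}: sum over overpartitions with largest part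
   <= m and at most n parts (k = number of parts). *)
Definition overgauss (R : comNzRingType) (m n : nat) (q t : R) : R :=
  \sum_(k < n.+1) \sum_(u : k.-tuple ('I_m.+1 * bool) | is_overpartition (op_seq u))
     t ^+ op_novl (op_seq u) * q ^+ op_weight (op_seq u).

Definition qpoch (R : comNzRingType) (q : R) (k : nat) : R :=
  \prod_(1 <= j < k.+1) (1 - q ^+ j).

From mathcomp Require Import all_boot all_order all_algebra.
From mathcomp Require Import zify ring.
Import GRing.Theory.
Set Implicit Arguments. Unset Strict Implicit.
Local Open Scope ring_scope.

(* Removing the largest part a of an overpartition with k + 1 parts, all at
   most c, leaves one with k parts at most a, or at most a - 1 if a is
   overlined.  Consequently the left-hand side G(m, n) satisfies
     G(m+1, n+1) = G(m, n+1) + q^(m+1) (G(m+1, n) + t G(m, n)),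
   G(0, n) = G(m, 0) = 1,
   the two extra terms counting the overpartitions whose largest part is
   m + 1, unoverlined or overlined.  The closed form obeys the same
   recurrence term by term, so the two agree by double induction. *)

Definition parts_le (c : nat) (s : seq (nat * bool)) : bool :=
  all (fun x => x.1 <= c)%N s.

Lemma is_overpartition_cons_le (a : nat) (b : bool) (c : nat) (s : seq (nat * bool)) :
  is_overpartition ((a, b) :: s) && parts_le c ((a, b) :: s) =
  [&& (0 < a)%N, (a <= c)%N, is_overpartition s & parts_le (a - b) s].
Proof.
have ge_trans : transitive (fun x y : nat * bool => y.1 <= x.1)%N.
  by move=> x y z /= h1 h2; exact: leq_trans h2 h1.
case: s => [|[y e] s]; first by rewrite /is_overpartition /parts_le /= !andbT.
rewrite /is_overpartition /parts_le /= !path_sortedE //=.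
case s_le_y: (all (fun x : nat * bool => x.1 <= y)%N s); last by rewrite !andbF.
have s_le X : (y <= X)%N && all (fun x : nat * bool => x.1 <= X)%N s = (y <= X)%N.
  case: (leqP y X) => //= y_le_X.
  by apply: sub_all s_le_y => x /= /leq_trans; apply.
rewrite !s_le.
set A := all _ s; set S := sorted _ s; set L := match s with [::] => _ | _ :: _ => _ end.
by case: A; case: S; case: L; case: b; rewrite /= ?andbT ?andbF //; lia.
Qed.

Lemma big_ord_pos_le (M c : nat) (V : nmodType) (g : nat -> V) : (c <= M)%N ->
  \sum_(i < M.+1 | (0 < i <= c)%N) g i = \sum_(1 <= a < c.+1) g a.
Proof.
move=> c_le_M.
rewrite -(big_mkord (fun i => (0 < i <= c)%N)) (big_nat_widen 1 c.+1 M.+1) //.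
rewrite big_ltn_cond //= big_nat_cond [RHS]big_nat_cond.
by apply: eq_bigl => i; lia.
Qed.

Section OverpartitionGF.
Variables (R : comNzRingType) (q t : R).

Definition op_term (s : seq (nat * bool)) : R := t ^+ op_novl s * q ^+ op_weight s.

Lemma op_term_cons (a : nat) (b : bool) (s : seq (nat * bool)) :
  op_term ((a, b) :: s) = t ^+ b * q ^+ a * op_term s.
Proof. by rewrite /op_term /op_novl /op_weight /= !exprD; ring. Qed.

Definition op_gf_le (M k c : nat) : R :=
  \sum_(u : k.-tuple ('I_M.+1 * bool) |
          is_overpartition (op_seq u) && parts_le c (op_seq u)) op_term (op_seq u).

Lemma op_gf_leS (M k c : nat) :
  op_gf_le M k.+1 c = \sum_(x : 'I_M.+1 * bool | (0 < x.1 <= c)%N)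
                        t ^+ x.2 * q ^+ x.1 * op_gf_le M k (x.1 - x.2).
Proof.
rewrite /op_gf_le (reindex (fun p : ('I_M.+1 * bool) * k.-tuple ('I_M.+1 * bool) =>
                             [tuple of p.1 :: p.2])); last first.
  exists (fun u => (thead u, [tuple of behead u])) => [[x u] _ | u _] /=.
    by congr (_, _); apply: val_inj.
  by rewrite -tuple_eta.
under [RHS]eq_bigr do rewrite big_distrr.
rewrite pair_big_dep /=.
apply: eq_big => [[[x b] u] | [[x b] u] _];
  have -> : op_seq [tuple of (x, b) :: u] = (x : nat, b) :: op_seq u by [].
  by rewrite is_overpartition_cons_le andbA.
by rewrite op_term_cons.
Qed.

Fixpoint op_gf (k c : nat) : R :=
  if k is k'.+1 then \sum_(1 <= a < c.+1) q ^+ a * (op_gf k' a + t * op_gf k' a.-1)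
  else 1.

Lemma op_gf_leE (M k c : nat) : (c <= M)%N -> op_gf_le M k c = op_gf k c.
Proof.
elim: k c => [|k IHk] c c_le_M.
  rewrite /op_gf_le (eq_bigl (pred1 [tuple])) ?big_pred1_eq; first by rewrite /op_term mulr1.
  by move=> u; rewrite (tuple0 u); apply/esym/eqP.
rewrite op_gf_leS big_mkcond.
rewrite -(pair_big xpredT xpredT (fun (i : 'I_M.+1) (b : bool) =>
  if (0 < i <= c)%N then t ^+ b * q ^+ i * op_gf_le M k (i - b) else 0)) /=.
rewrite -(big_ord_pos_le (fun a => q ^+ a * (op_gf k a + t * op_gf k a.-1)) c_le_M).
rewrite [RHS]big_mkcond; apply: eq_bigr => i _; rewrite big_bool /=.
case: ifP => [/andP[i_gt0 i_le_c] | _]; last by rewrite addr0.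
rewrite subn0 subn1 !IHk; [|lia|lia].
by rewrite expr1 expr0; ring.
Qed.

Lemma overgauss_op_gf (m n : nat) : overgauss m n q t = \sum_(k < n.+1) op_gf k m.
Proof.
apply: eq_bigr => k _; rewrite -(op_gf_leE k (leqnn m)).
apply: eq_bigl => u; rewrite [parts_le _ _](_ : _ = true) ?andbT //.
by apply/allP => x /mapP [p _ ->] /=; rewrite -ltnS ltn_ord.
Qed.

Lemma op_gfSS (k m : nat) :
  op_gf k.+1 m.+1 = op_gf k.+1 m + q ^+ m.+1 * (op_gf k m.+1 + t * op_gf k m).
Proof. by rewrite /= big_nat_recr. Qed.

Lemma overgaussSS (m n : nat) :
  overgauss m.+1 n.+1 q t =
  overgauss m n.+1 q t + q ^+ m.+1 * (overgauss m.+1 n q t + t * overgauss m n q t).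
Proof.
rewrite !overgauss_op_gf big_ord_recl [in RHS]big_ord_recl.
under eq_bigr do rewrite lift0 op_gfSS.
under [in RHS]eq_bigr do rewrite lift0.
rewrite big_split /= -addrA; congr (_ + (_ + _)).
by rewrite -mulr_sumr big_split /= -mulr_sumr.
Qed.

Lemma overgauss0n (n : nat) : overgauss 0 n q t = 1.
Proof.
rewrite overgauss_op_gf big_ord_recl big1 ?addr0 // => i _.
by rewrite /= big_geq.
Qed.

Lemma overgaussm0 (m : nat) : overgauss m 0 q t = 1.
Proof. by rewrite overgauss_op_gf big_ord1. Qed.

End OverpartitionGF.

Section GaussianSum.
Variables (F : fieldType) (q t : F).
Local Notation P := (qpoch q).

Lemma qpoch0 : P 0 = 1.
Proof. by rewrite /qpoch big_geq. Qed.

Lemma qpochS (j : nat) : P j.+1 = P j * (1 - q ^+ j.+1).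
Proof. by rewrite /qpoch big_nat_recr. Qed.

Lemma triangularS (k : nat) : ((k.+1 * k.+2) %/ 2 = (k * k.+1) %/ 2 + k.+1)%N.
Proof.
have -> : (k.+1 * k.+2 = k.+1 * 2 + k * k.+1)%N by ring.
by rewrite divnMDl // addnC.
Qed.

Definition gauss_term (m n k : nat) : F :=
  t ^+ k * q ^+ ((k * k.+1) %/ 2) * P (m + n - k) / (P k * P (m - k) * P (n - k)).

Definition gauss_sum (m n : nat) : F := \sum_(k < (minn m n).+1) gauss_term m n k.

Definition ext_gauss_term (m n k : nat) : F :=
  if (k <= m)%N && (k <= n)%N then gauss_term m n k else 0.

Lemma gauss_sum_widen (m n K : nat) :
  (minn m n < K)%N -> gauss_sum m n = \sum_(k < K) ext_gauss_term m n k.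
Proof.
move=> lt_min_K; rewrite /gauss_sum (big_ord_widen K (gauss_term m n)) // big_mkcond.
by apply: eq_bigr => k _; rewrite /ext_gauss_term ltnS leq_min.
Qed.

Lemma gauss_sum0n (n : nat) : P n != 0 -> gauss_sum 0 n = 1.
Proof.
move=> Pn_neq0; rewrite /gauss_sum min0n big_ord1 /gauss_term /= !subn0 add0n.
by rewrite qpoch0 !expr0 !mul1r divff.
Qed.

Lemma gauss_summ0 (m : nat) : P m != 0 -> gauss_sum m 0 = 1.
Proof.
move=> Pm_neq0; rewrite /gauss_sum minn0 big_ord1 /gauss_term /= !subn0 addn0.
by rewrite qpoch0 !expr0 !mul1r mulr1 divff.
Qed.

Variable B : nat.
Hypothesis qpoch_neq0 : forall j, (j <= B)%N -> P j != 0.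

Lemma qfactor_neq0 (j : nat) : (j.+1 <= B)%N -> 1 - q ^+ j.+1 != 0.
Proof.
by move=> /qpoch_neq0; rewrite qpochS mulf_eq0 negb_or => /andP[].
Qed.

Local Ltac solve_neq0 := rewrite ?qpoch_neq0 ?qfactor_neq0 //; lia.

Definition pascal_factor (k a b : nat) : F :=
  t ^+ k.+1 * q ^+ ((k * k.+1) %/ 2 + k.+1) * P (k + a + b) / (P k.+1 * P a * P b).

Lemma ext_gauss_term_SSS (k a b : nat) : ((k + a + b).+1 <= B)%N ->
  ext_gauss_term (k + a).+1 (k + b).+1 k.+1 = pascal_factor k a b * (1 - q ^+ (k + a + b).+1).
Proof.
move=> le_B; rewrite /ext_gauss_term ifT; last by lia.
rewrite /gauss_term /pascal_factor.
have -> : ((k + a).+1 + (k + b).+1 - k.+1 = (k + a + b).+1)%N by lia.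
have -> : ((k + a).+1 - k.+1 = a)%N by lia.
have -> : ((k + b).+1 - k.+1 = b)%N by lia.
by rewrite triangularS qpochS; field; solve_neq0.
Qed.

Lemma ext_gauss_term_mSS (k a b : nat) : ((k + a + b).+1 <= B)%N ->
  ext_gauss_term (k + a) (k + b).+1 k.+1 = pascal_factor k a b * (1 - q ^+ a).
Proof.
case: a => [|a] le_B.
  by rewrite /ext_gauss_term ifF ?expr0 ?subrr ?mulr0 //; lia.
rewrite /ext_gauss_term ifT; last by lia.
rewrite /gauss_term /pascal_factor.
have -> : (k + a.+1 + (k + b).+1 - k.+1 = k + a.+1 + b)%N by lia.
have -> : (k + a.+1 - k.+1 = a)%N by lia.
have -> : ((k + b).+1 - k.+1 = b)%N by lia.
by rewrite triangularS (qpochS a); field; solve_neq0.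
Qed.

Lemma ext_gauss_term_SnS (k a b : nat) : ((k + a + b).+1 <= B)%N ->
  ext_gauss_term (k + a).+1 (k + b) k.+1 = pascal_factor k a b * (1 - q ^+ b).
Proof.
case: b => [|b] le_B.
  by rewrite /ext_gauss_term ifF ?expr0 ?subrr ?mulr0 //; lia.
rewrite /ext_gauss_term ifT; last by lia.
rewrite /gauss_term /pascal_factor.
have -> : ((k + a).+1 + (k + b.+1) - k.+1 = k + a + b.+1)%N by lia.
have -> : ((k + a).+1 - k.+1 = a)%N by lia.
have -> : (k + b.+1 - k.+1 = b)%N by lia.
by rewrite triangularS (qpochS b); field; solve_neq0.
Qed.

Lemma ext_gauss_term_mnk (k a b : nat) : ((k + a + b).+1 <= B)%N ->
  q ^+ k.+1 * (t * ext_gauss_term (k + a) (k + b) k) = pascal_factor k a b * (1 - q ^+ k.+1).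
Proof.
move=> le_B; rewrite /ext_gauss_term ifT; last by lia.
rewrite /gauss_term /pascal_factor.
have -> : (k + a + (k + b) - k = k + a + b)%N by lia.
have -> : (k + a - k = a)%N by lia.
have -> : (k + b - k = b)%N by lia.
by rewrite (qpochS k) exprD [t ^+ k.+1]exprS; field; solve_neq0.
Qed.

(* The termwise recurrence reduces to
   [1 - q^(k+a+b+1) = (1 - q^a) + q^(k+a+1) (1 - q^b) + q^a (1 - q^(k+1))]. *)
Lemma ext_gauss_termSS (m n k : nat) : (m + n + 2 <= B)%N ->
  ext_gauss_term m.+1 n.+1 k.+1 = ext_gauss_term m n.+1 k.+1 +
    q ^+ m.+1 * (ext_gauss_term m.+1 n k.+1 + t * ext_gauss_term m n k).
Proof.
move=> le_B; have [/andP[k_le_m k_le_n] | k_gt] := boolP ((k <= m) && (k <= n))%N;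
  last by rewrite /ext_gauss_term !ifF ?(mulr0, addr0) //; lia.
have [a def_m] : exists a, m = (k + a)%N by exists (m - k)%N; lia.
have [b def_n] : exists b, n = (k + b)%N by exists (n - k)%N; lia.
subst m n.
have le_B' : ((k + a + b).+1 <= B)%N by lia.
rewrite ext_gauss_term_SSS // ext_gauss_term_mSS // ext_gauss_term_SnS //.
have -> : ((k + a).+1 = a + k.+1)%N by lia.
rewrite exprD -mulrA [q ^+ k.+1 * _]mulrDr ext_gauss_term_mnk //.
have -> : ((k + a + b).+1 = a + k.+1 + b)%N by lia.
by rewrite !exprD; ring.
Qed.

Lemma ext_gauss_termSS0 (m n : nat) : (m + n + 2 <= B)%N ->
  ext_gauss_term m.+1 n.+1 0 = ext_gauss_term m n.+1 0 + q ^+ m.+1 * ext_gauss_term m.+1 n 0.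
Proof.
move=> le_B; rewrite /ext_gauss_term /gauss_term /= !subn0 !expr0 qpoch0.
have -> : (m.+1 + n.+1 = (m + n.+1).+1)%N by lia.
have -> : (m.+1 + n = m + n.+1)%N by lia.
rewrite qpochS (qpochS m) (qpochS n).
have -> : ((m + n.+1).+1 = m.+1 + n.+1)%N by lia.
by rewrite exprD; field; solve_neq0.
Qed.

Lemma gauss_sumSS (m n : nat) : (m + n + 2 <= B)%N ->
  gauss_sum m.+1 n.+1 = gauss_sum m n.+1 + q ^+ m.+1 * (gauss_sum m.+1 n + t * gauss_sum m n).
Proof.
move=> le_B; set K := (m + n).+2.
rewrite (@gauss_sum_widen m n K) ?(@gauss_sum_widen _ _ K.+1); [|lia..].
rewrite ![\sum_(k < K.+1) _]big_ord_recl ext_gauss_termSS0 //.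
under eq_bigr do rewrite lift0 ext_gauss_termSS // mulrDr.
under [\sum_(i < K) ext_gauss_term m n.+1 _]eq_bigr do rewrite lift0.
under [\sum_(i < K) ext_gauss_term m.+1 n _]eq_bigr do rewrite lift0.
by rewrite !big_split /= !mulrDr !mulr_sumr; ring.
Qed.

End GaussianSum.

Lemma overgauss_gauss_sum (F : fieldType) (q t : F) (m n : nat) :
  (forall j, (j <= m + n)%N -> qpoch q j != 0) -> overgauss m n q t = gauss_sum q t m n.
Proof.
elim: m n => [|m IHm] n qpoch_neq0.
  by rewrite overgauss0n gauss_sum0n // qpoch_neq0.
elim: n qpoch_neq0 => [|n IHn] qpoch_neq0.
  by rewrite overgaussm0 gauss_summ0 // qpoch_neq0 // addn0.
rewrite overgaussSS (gauss_sumSS t qpoch_neq0); last by lia.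
rewrite IHn => [|j le_j]; last by apply: qpoch_neq0; lia.
by rewrite !IHm // => j le_j; apply: qpoch_neq0; lia.
Qed.

Theorem theorem2p2 (F : fieldType) (q t : F) (m n : nat)
  (hq : forall j : nat, (j <= m + n)%N -> qpoch q j != 0) :
  overgauss m n q t =
  \sum_(k < (minn m n).+1)
     t ^+ k * q ^+ ((k * k.+1) %/ 2) * qpoch q (m + n - k)
       / (qpoch q k * qpoch q (m - k) * qpoch q (n - k)).
Proof. exact: overgauss_gauss_sum. Qed.
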